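(* In the option framework described in the context, let the intra-option policies $\pi_o(s,a,\theta)$ be differentiable in $\theta$, and for a vector $\eta$ (of the same dimension as $\theta$) define the compatible function approximator $f^{\pi_o}_\eta(s,a)=\eta^T\frac{\partial\ln\pi_o(s,a,\theta)}{\partial\theta}$ and the squared error $$\epsilon(\eta,\theta)=\sum_{s,o,a}\mu_{\mathcal O}(s,o)\pi_o(s,a,\theta)\big(f^{\pi_o}_\eta(s,a)-a_U(s,o,a)\big)^2 .$$ Let $G_\theta=\sum_{s,o}\mu_{\mathcal O}(s,o)\sum_a\pi_o(s,a,\theta)\frac{\partial\ln\pi_o(s,a,\theta)}{\partial\theta}\big(\frac{\partial\ln\pi_o(s,a,\theta)}{\partial\theta}\big)^T$ (assumed invertible). If $\tilde\eta$ is a local minimum of $\epsilon(\cdot,\theta)$, then $$G_\theta^{-1}\frac{\partial q_{\pi_{\mathcal O}}(s_0,o_0)}{\partial\theta}=\tilde\eta,$$ i.e. $\tilde\eta$ is the natural gradient of the expected discounted return with respect to $\theta$.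
   Context: Finite MDP with states $\mathcal S$, actions $\mathcal A$, transition function $P$, discount $\gamma$; finite option set $\mathcal O$ with intra-option policies $\pi_o(s,a,\theta)$, terminations $\beta_o(s)$ and a policy over options $\pi_{\mathcal O}(s,o)$; in state $s_t$ with option $o_t$ the agent draws $a_t\sim\pi_{o_t}(s_t,\cdot,\theta)$, moves to $s_{t+1}$, and $o_t$ terminates there with probability $\beta_{o_t}(s_{t+1})$, after which a new option is drawn from $\pi_{\mathcal O}(s_{t+1},\cdot)$. Value functions (expected discounted returns): $q_{\pi_{\mathcal O}}(s,o)$ given $S_0=s,O_0=o$; $q_U(s,o,a)$ given $S_0=s,O_0=o,A_0=a$; state-option-action advantage $a_U(s,o,a)=q_U(s,o,a)-q_{\pi_{\mathcal O}}(s,o)$. $\mu_{\mathcal O}(s,o)=\sum_{t\ge0}\gamma^t\Pr(S_t=s,O_t=o\mid s_0,o_0)$ is the discounted weighting of state-option pairs from the start pair $(s_0,o_0)$ (treated as the stationary distribution of the process that terminates with probability $1-\gamma$ per step). The gradient $\partial q_{\pi_{\mathcal O}}(s_0,o_0)/\partial\theta$ is given by the intra-option policy gradient theorem: $\frac{\partial q_{\pi_{\mathcal O}}(s_0,o_0)}{\partial\theta}=\sum_{s,o}\mu_{\mathcal O}(s,o)\sum_a\frac{\partial\pi_o(s,a,\theta)}{\partial\theta}q_U(s,o,a)$. *)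

From HB Require Import structures.
From mathcomp Require Import all_boot all_order all_algebra.
From mathcomp Require Import all_classical all_reals all_analysis.
Set Implicit Arguments. Unset Strict Implicit. Unset Printing Implicit Defensive.
Import Order.TTheory GRing.Theory Num.Theory.
Import numFieldNormedType.Exports.
Local Open Scope ring_scope.

(* A finite MDP with a finite option set, minus the intra-option policies:
   P s a s' = transition probability, rew s a = expected immediate reward,
   gam = discount, beta o s = termination prob. of option o in state s,
   piO s o = policy over options. *)
Record optMDP (R : realType) (S A O : finType) := OptMDP {
  P : S -> A -> S -> R;
  rew : S -> A -> R;
  gam : R;
  beta : O -> S -> R;
  piO : S -> O -> R }.

(* Intra-option policies parameterised by theta : 'cV[R]_d:
   pi o theta s a = pi_o(s,a,theta). *)
Definition policy (R : realType) (S A O : finType) (d : nat) :=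
  O -> 'cV[R]_d -> S -> A -> R.

Section Defs.
Variables (R : realType) (S A O : finType) (d : nat).
Variables (M : optMDP R S A O) (pi : policy R S A O d).

(* one-step transition kernel of the (state, option) process:
   (s,o) -> (s',o'): draw a ~ pi_o(s,.), s' ~ P, then o continues with prob
   1 - beta_o(s'), or terminates and o' ~ piO(s',.). *)
Definition kernel (th : 'cV[R]_d) (x y : S * O) : R :=
  \sum_(a : A) pi x.2 th x.1 a * P M x.1 a y.1 *
     ((1 - beta M x.2 y.1) * (y.2 == x.2)%:R + beta M x.2 y.1 * piO M y.1 y.2).

(* distr th x0 t y = Pr(S_t = y.1, O_t = y.2 | S_0,O_0 = x0) *)
Fixpoint distr (th : 'cV[R]_d) (x0 : S * O) (t : nat) (y : S * O) : R :=
  match t with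
  | 0 => (y == x0)%:R
  | t'.+1 => \sum_(x : S * O) distr th x0 t' x * kernel th x y
  end.

Definition muO (th : 'cV[R]_d) (x0 : S * O) (y : S * O) : R :=
  limn (fun n => \sum_(0 <= t < n) gam M ^+ t * distr th x0 t y).

Definition rbar (th : 'cV[R]_d) (y : S * O) : R :=
  \sum_(a : A) pi y.2 th y.1 a * rew M y.1 a.

Definition qO (th : 'cV[R]_d) (s : S) (o : O) : R :=
  limn (fun n => \sum_(0 <= t < n)
         gam M ^+ t * \sum_(y : S * O) distr th (s, o) t y * rbar th y).

(* value upon arrival in s' with option o *)
Definition Uval (th : 'cV[R]_d) (o : O) (s' : S) : R :=
  (1 - beta M o s') * qO th s' o +
  beta M o s' * \sum_(o' : O) piO M s' o' * qO th s' o'.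

Definition qU (th : 'cV[R]_d) (s : S) (o : O) (a : A) : R :=
  rew M s a + gam M * \sum_(s' : S) P M s a s' * Uval th o s'.

Definition aU (th : 'cV[R]_d) (s : S) (o : O) (a : A) : R :=
  qU th s o a - qO th s o.

End Defs.

Definition grad (R : realType) (d : nat) (f : 'cV[R]_d -> R) (th : 'cV[R]_d)
  : 'cV[R]_d := \col_(i < d) 'D_(delta_mx i 0) f th.

Section Defs2.
Variables (R : realType) (S A O : finType) (d : nat).
Variables (M : optMDP R S A O) (pi : policy R S A O d).

Definition score (th : 'cV[R]_d) (o : O) (s : S) (a : A) : 'cV[R]_d :=
  grad (fun t => ln (pi o t s a)) th.

Definition fcompat (eta th : 'cV[R]_d) (o : O) (s : S) (a : A) : R :=
  (eta^T *m score th o s a) 0 0.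

Definition eps_err (x0 : S * O) (eta th : 'cV[R]_d) : R :=
  \sum_(s : S) \sum_(o : O) \sum_(a : A)
     muO M pi th x0 (s, o) * pi o th s a *
     (fcompat eta th o s a - aU M pi th s o a) ^+ 2.

Definition Gmat (x0 : S * O) (th : 'cV[R]_d) : 'M[R]_d :=
  \sum_(s : S) \sum_(o : O) muO M pi th x0 (s, o) *:
     \sum_(a : A) pi o th s a *: (score th o s a *m (score th o s a)^T).

End Defs2.

(* The log-derivative trick turns the policy gradient theorem into
   [dq/dtheta = sum mu sum_a pi_o a_U psi] with [psi = d ln pi_o / d theta]; the
   advantage may replace [q_U] because [sum_a d pi_o / d theta = 0].  The error
   [epsilon(., theta)] is a quadratic in [eta] whose gradient at [eta] is twice
   [sum mu sum_a pi_o (f_eta - a_U) psi]; at a local minimum this vanishes, i.e.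
   [G_theta eta = sum mu sum_a pi_o a_U psi = dq/dtheta]. *)
From HB Require Import structures.
From mathcomp Require Import all_boot all_order all_algebra.
From mathcomp Require Import all_classical all_reals all_analysis.
From mathcomp Require Import ring lra.
Import Order.TTheory GRing.Theory Num.Theory.
Import numFieldNormedType.Exports.
Set Implicit Arguments. Unset Strict Implicit. Unset Printing Implicit Defensive.
Local Open Scope ring_scope.

Lemma derive_ln_comp (R : realType) d (f : 'cV[R]_d -> R) (x v : 'cV[R]_d) :
  differentiable f x -> 0 < f x ->
  'D_v (fun t => ln (f t)) x = (f x)^-1 * 'D_v f x.
Proof.
move=> df fx_gt0.
have dln : differentiable (@ln R) (f x).
  by apply/derivable1_diffP; apply: ex_derive; exact: is_derive1_ln.
rewrite (_ : (fun t => ln (f t)) = @ln R \o f) //.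
rewrite deriveE; last exact: differentiable_comp.
rewrite diff_comp // /= diff1E // [in RHS]deriveE // derive1E.
by have [_ ->] := is_derive1_ln fx_gt0; rewrite mulrC.
Qed.

Lemma derive_bigsum (R : realType) d (I : finType) (f : I -> 'cV[R]_d -> R)
    (x v : 'cV[R]_d) :
  (forall i, differentiable (f i) x) ->
  'D_v (fun t => \sum_i f i t) x = \sum_i 'D_v (f i) x.
Proof.
move=> df; apply: derive_val.
rewrite (_ : (fun t => \sum_i f i t) = \sum_i f i); last first.
  by apply/funext => t; rewrite fct_sumE.
elim/big_ind2 : _ => [|? ? ? ? ? ?|i _]; first exact: is_derive_cst.
  exact: is_deriveD.
exact/derivableP/diff_derivable.
Qed.

Lemma quadratic_ge0_near0_slope_eq0 (R : realFieldType) (b c : R) :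
  (\forall t \near 0, 0 <= t * b + t ^+ 2 * c) -> b = 0.
Proof.
case/nbhs_normP => e /= e_gt0 quad_ge0.
have K_gt0 : 0 < 1 + `|b| + e * `|c| by have := normr_ge0 b; have := normr_ge0 c; nra.
set delta := e / (1 + `|b| + e * `|c|).
have delta_gt0 : 0 < delta by rewrite divr_gt0.
have delta_b : delta * `|b| < e.
  by rewrite mulrAC ltr_pdivrMr //; have := normr_ge0 c; nra.
have delta_c : delta * c < 1.
  apply: (le_lt_trans (ler_wpM2l (ltW delta_gt0) (ler_norm c))).
  by rewrite mulrAC ltr_pdivrMr // mul1r; have := normr_ge0 b; nra.
have := quad_ge0 (- (delta * b)).
rewrite /= sub0r opprK normrM gtr0_norm // => /(_ delta_b).
have -> : - (delta * b) * b + (- (delta * b)) ^+ 2 * c =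
          delta * (b ^+ 2 * (delta * c - 1)) by ring.
rewrite pmulr_rge0 // nmulr_lge0 ?subr_lt0 // => b2_le0.
by apply/eqP; rewrite -sqrf_eq0 eq_le sqr_ge0 b2_le0.
Qed.

Lemma mulmx_outer (R : comPzRingType) d (u w v : 'cV[R]_d) :
  u *m w^T *m v = (v^T *m w) 0 0 *: u.
Proof.
rewrite -mulmxA [w^T *m v]mx11_scalar mul_mx_scalar.
by congr (_ *: _); rewrite !mxE; apply: eq_bigr => k _; rewrite !mxE mulrC.
Qed.

Lemma fcompat_shift (R : realType) (S A O : finType) d (pi : policy R S A O d)
    (eta th : 'cV[R]_d) (t : R) (i : 'I_d) o s a :
  fcompat pi (eta + t *: delta_mx i 0) th o s a =
  fcompat pi eta th o s a + t * score pi th o s a i 0.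
Proof.
rewrite /fcompat linearD linearZ /= mulmxDl -scalemxAl trmx_delta -rowE.
by rewrite !mxE.
Qed.

Section CompatibleApproximation.
Variables (R : realType) (S A O : finType) (d : nat).
Variables (M : optMDP R S A O) (pi : policy R S A O d).
Variables (x0 : S * O) (th : 'cV[R]_d).

Let mu s o := muO M pi th x0 (s, o).

Definition score_wsum (g : S -> O -> A -> R) : 'cV[R]_d :=
  \sum_s \sum_o mu s o *: \sum_a (pi o th s a * g s o a) *: score pi th o s a.

Lemma score_wsumB (g h : S -> O -> A -> R) :
  score_wsum (fun s o a => g s o a - h s o a) = score_wsum g - score_wsum h.
Proof.
rewrite /score_wsum -sumrB; apply: eq_bigr => s _.
rewrite -sumrB; apply: eq_bigr => o _.
rewrite -scalerBr -sumrB; congr (_ *: _); apply: eq_bigr => a _.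
by rewrite -scalerBl mulrBr.
Qed.

Lemma Gmat_mulmx (eta : 'cV[R]_d) :
  Gmat M pi x0 th *m eta = score_wsum (fun s o a => fcompat pi eta th o s a).
Proof.
rewrite mulmx_suml; apply: eq_bigr => s _.
rewrite mulmx_suml; apply: eq_bigr => o _.
rewrite -scalemxAl mulmx_suml; congr (_ *: _); apply: eq_bigr => a _.
by rewrite -scalemxAl mulmx_outer scalerA.
Qed.

Lemma eps_err_shift (eta : 'cV[R]_d) (i : 'I_d) (t : R) :
  eps_err M pi x0 (eta + t *: delta_mx i 0) th =
  eps_err M pi x0 eta th
  + t * (2 * score_wsum (fun s o a => fcompat pi eta th o s a - aU M pi th s o a) i 0)
  + t ^+ 2 * \sum_s \sum_o \sum_a mu s o * pi o th s a * score pi th o s a i 0 ^+ 2.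
Proof.
rewrite /eps_err summxE !mulr_sumr -!big_split; apply: eq_bigr => s _.
rewrite summxE !mulr_sumr -!big_split; apply: eq_bigr => o _.
rewrite mxE summxE !mulr_sumr -!big_split; apply: eq_bigr => a _.
by rewrite fcompat_shift /= !mxE /mu; ring.
Qed.

Lemma eps_err_local_min_residual (eta : 'cV[R]_d) :
  (\forall eta' \near eta, eps_err M pi x0 eta th <= eps_err M pi x0 eta' th) ->
  score_wsum (fun s o a => fcompat pi eta th o s a - aU M pi th s o a) = 0.
Proof.
move=> /nbhs0P eta_min; apply/matrixP => i j; rewrite (ord1 j) mxE.
suff /eqP : 2 * score_wsum (fun s o a => fcompat pi eta th o s a
                                        - aU M pi th s o a) i 0 = 0.
  by rewrite mulf_eq0 pnatr_eq0 => /eqP.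
apply: quadratic_ge0_near0_slope_eq0.
move: eta_min => /(near0Z (delta_mx i 0)); apply: filterS => t.
by rewrite eps_err_shift -addrA lerDl; apply.
Qed.

Hypothesis pi_gt0 : forall o t s a, 0 < pi o t s a.
Hypothesis pi_sum1 : forall o t s, \sum_a pi o t s a = 1.
Hypothesis pi_diff : forall o s a t, differentiable (fun t' => pi o t' s a) t.

Lemma grad_policy_score o s a :
  grad (fun t => pi o t s a) th = pi o th s a *: score pi th o s a.
Proof.
apply/matrixP => i j; rewrite !mxE derive_ln_comp //.
by rewrite mulrA mulfV ?mul1r // gt_eqF.
Qed.

Lemma sum_grad_policy_eq0 o s : \sum_a grad (fun t => pi o t s a) th = 0.
Proof.
apply/matrixP => i j; rewrite summxE mxE.
under eq_bigr do rewrite mxE.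
rewrite -(derive_bigsum (f := fun a t => pi o t s a)) //.
rewrite (_ : (fun t => \sum_a pi o t s a) = cst 1) ?derive_cst //.
by apply/funext => t; rewrite pi_sum1.
Qed.

Lemma policy_gradient_baseline o s (q : A -> R) (v : R) :
  \sum_a q a *: grad (fun t => pi o t s a) th =
  \sum_a (pi o th s a * (q a - v)) *: score pi th o s a.
Proof.
have -> : \sum_a q a *: grad (fun t => pi o t s a) th =
    \sum_a (q a - v) *: grad (fun t => pi o t s a) th
    + v *: \sum_a grad (fun t => pi o t s a) th.
  by rewrite scaler_sumr -big_split; apply: eq_bigr => a _ /=; rewrite -scalerDl subrK.
rewrite sum_grad_policy_eq0 scaler0 addr0; apply: eq_bigr => a _.
by rewrite grad_policy_score scalerA mulrC.
Qed.

Lemma policy_gradient_advantage :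
  \sum_s \sum_o mu s o *: \sum_a qU M pi th s o a *: grad (fun t => pi o t s a) th =
  score_wsum (aU M pi th).
Proof.
apply: eq_bigr => s _; apply: eq_bigr => o _.
by rewrite (policy_gradient_baseline _ _ _ (qO M pi th s o)).
Qed.

End CompatibleApproximation.

Theorem mainTheorem5 (R : realType) (S A O : finType) (d : nat)
  (M : optMDP R S A O) (pi : policy R S A O d)
  (s0 : S) (o0 : O) (th eta_t : 'cV[R]_d) :
  (* standing assumptions on the MDP and the options *)
  0 <= gam M < 1 ->
  (forall s a s', 0 <= P M s a s') ->
  (forall s a, \sum_(s' : S) P M s a s' = 1) ->
  (forall o s, 0 <= beta M o s <= 1) ->
  (forall s o, 0 <= piO M s o) ->
  (forall s, \sum_(o : O) piO M s o = 1) ->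
  (* intra-option policies: (strictly positive, so ln pi is defined)
     probability distributions, differentiable in theta *)
  (forall o t s a, 0 < pi o t s a) ->
  (forall o t s, \sum_(a : A) pi o t s a = 1) ->
  (forall o s a t, differentiable (fun t' => pi o t' s a) t) ->
  (* intra-option policy gradient theorem (given in the context) *)
  grad (fun t => qO M pi t s0 o0) th =
    \sum_(s : S) \sum_(o : O) muO M pi th (s0, o0) (s, o) *:
      \sum_(a : A) qU M pi th s o a *: grad (fun t => pi o t s a) th ->
  (* G_theta invertible *)
  Gmat M pi (s0, o0) th \in unitmx ->
  (* eta_t is a local minimum of epsilon(., theta) *)
  (\forall eta \near eta_t,
      eps_err M pi (s0, o0) eta_t th <= eps_err M pi (s0, o0) eta th) ->
  invmx (Gmat M pi (s0, o0) th) *m grad (fun t => qO M pi t s0 o0) th = eta_t.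
Proof.
(* the MDP assumptions only serve the policy gradient theorem, which is given *)
move=> _ _ _ _ _ _ pi_gt0 pi_sum1 pi_diff pgt G_unit eta_min.
rewrite pgt (policy_gradient_advantage M (s0, o0) th pi_gt0 pi_sum1 pi_diff).
have /eqP := eps_err_local_min_residual eta_min.
rewrite score_wsumB subr_eq0 => /eqP <-.
by rewrite -Gmat_mulmx mulKmx.
Qed.
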